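(* Let $c$ be a cost function, $\alpha_i>0$, $m_i$ measures on $\mathbb{R}^n$, and let $(\Phi_1,\dots,\Phi_N)$ be an admissible tuple maximizing $\mathcal{BS}_{\alpha,m}$ over all admissible tuples, with $0<\int e^{-\alpha_i\Phi_i}dm_i<\infty$ for all $i$. Let $\mu_i=e^{-\alpha_i\Phi_i}m_i/\int e^{-\alpha_i\Phi_i}dm_i$ and assume the Kantorovich duality holds for $(c;\mu_1,\dots,\mu_N)$. Then $(\Phi_1,\dots,\Phi_N)$ is a minimizer of the dual transportation problem for $c$ and $\mu_1,\dots,\mu_N$.
   Context: Points of $(\mathbb{R}^n)^N$ are written $x=(x_1,\dots,x_N)$, $x_i\in\mathbb{R}^n$. A tuple $(V_1,\dots,V_N)$ of functions $V_i:\mathbb{R}^n\to(-\infty,+\infty]$ is admissible (for the cost $c$) if $\sum_{i=1}^N V_i(x_i)\ge c(x)$ for all $x$. $\mathcal{BS}_{\alpha,m}(V_1,\dots,V_N)=\prod_{i=1}^N\bigl(\int_{\mathbb{R}^n}e^{-\alpha_iV_i}dm_i\bigr)^{1/\alpha_i}$. Kantorovich duality: for probability measures $\mu_1,\dots,\mu_N$, the primal problem is to maximize $\int c\,d\pi$ over probability measures $\pi$ on $(\mathbb{R}^n)^N$ with marginals $\mu_i$; the dual problem is to minimize $\sum_i\int f_i\,d\mu_i$ over admissible tuples $(f_i)$ with $f_i\in L^1(\mu_i)$. The Kantorovich duality holds for $(c;\mu_1,\dots,\mu_N)$ if the primal problem has a maximizer, the dual problem has a minimizer, and the two optimal values are equal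 and finite. *)

From HB Require Import structures.
From mathcomp Require Import all_boot all_order all_algebra.
From mathcomp Require Import all_classical all_reals all_analysis.
From mathcomp Require Import measurable_realfun.
Set Implicit Arguments. Unset Strict Implicit. Unset Printing Implicit Defensive.
Import Order.TTheory GRing.Theory Num.Theory.
Local Open Scope classical_set_scope.
Local Open Scope ring_scope.

(* R^n is modelled as [n.-tuple R] with its product (Borel) sigma-algebra;
   (R^n)^N as [N.-tuple (n.-tuple R)], and x_i is [tnth x i]. *)

Section Defs.
Local Open Scope ereal_scope.
Context {R : realType} (n N : nat).
Notation X := (n.-tuple R).
Notation XN := (N.-tuple (n.-tuple R)).

Definition admissible (c : XN -> \bar R) (V : 'I_N -> X -> \bar R) : Prop :=
  (forall i x, V i x != -oo) /\
  (forall x : XN, c x <= \sum_(i < N) V i (tnth x i)).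

Definition Zint (alpha : 'I_N -> R) (m : 'I_N -> {measure set X -> \bar R})
    (V : 'I_N -> X -> \bar R) (i : 'I_N) : \bar R :=
  \int[m i]_x expeR (- ((alpha i)%:E * V i x)).

Definition BS (alpha : 'I_N -> R) (m : 'I_N -> {measure set X -> \bar R})
    (V : 'I_N -> X -> \bar R) : \bar R :=
  \prod_(i < N) poweR (Zint alpha m V i) (alpha i)^-1.

Definition has_marginals (pi : probability XN R) (mu : 'I_N -> probability X R)
  : Prop :=
  forall (i : 'I_N) (A : set X), measurable A ->
    pi ((fun x : XN => tnth x i) @^-1` A) = mu i A.

Definition primal_value (c : XN -> \bar R) (pi : probability XN R) : \bar R :=
  \int[pi]_x c x.

Definition primal_maximizer (c : XN -> \bar R) (mu : 'I_N -> probability X R)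
    (pi : probability XN R) : Prop :=
  has_marginals pi mu /\
  forall pi' : probability XN R, has_marginals pi' mu ->
    primal_value c pi' <= primal_value c pi.

Definition dual_feasible (c : XN -> \bar R) (mu : 'I_N -> probability X R)
    (f : 'I_N -> X -> \bar R) : Prop :=
  admissible c f /\ forall i, (mu i).-integrable setT (f i).

Definition dual_value (mu : 'I_N -> probability X R)
    (f : 'I_N -> X -> \bar R) : \bar R :=
  \sum_(i < N) \int[mu i]_x f i x.

Definition dual_minimizer (c : XN -> \bar R) (mu : 'I_N -> probability X R)
    (f : 'I_N -> X -> \bar R) : Prop :=
  dual_feasible c mu f /\
  forall g, dual_feasible c mu g -> dual_value mu f <= dual_value mu g.

Definition kantorovich_duality (c : XN -> \bar R)
    (mu : 'I_N -> probability X R) : Prop :=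
  exists (pi : probability XN R) (f : 'I_N -> X -> \bar R),
    [/\ primal_maximizer c mu pi, dual_minimizer c mu f,
        primal_value c pi = dual_value mu f &
        primal_value c pi \is a fin_num].

End Defs.

From HB Require Import structures.
From mathcomp Require Import all_boot all_order all_algebra.
From mathcomp Require Import all_classical all_reals all_analysis.
From mathcomp Require Import measurable_realfun.
From mathcomp Require Import lra.
Import Order.TTheory GRing.Theory Num.Theory.
Local Open Scope classical_set_scope.
Local Open Scope ring_scope.

(* Write Z_i for the normalizing constants, so that mu_i has density
   e^{-alpha_i Phi_i} / Z_i with respect to m_i.  For admissible V with
   V_i in L^1(mu_i), integrating e^{-alpha_i V_i} = e^{alpha_i (Phi_i - V_i)}
   e^{-alpha_i Phi_i} against m_i and applying Jensen's inequality gives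
   Z_i exp(alpha_i (int Phi_i dmu_i - int V_i dmu_i)) <= int e^{-alpha_i V_i} dm_i,
   hence BS(V) >= BS(Phi) exp(sum_i (int Phi_i dmu_i - int V_i dmu_i)), and
   maximality of Phi yields sum_i int Phi_i dmu_i <= sum_i int V_i dmu_i.
   Kantorovich duality is only needed to make Phi_i mu_i-integrable: an
   integrable dual minimizer f bounds the positive part through
   Phi_i^+ <= f_i^+ + e^{alpha_i (Phi_i - f_i)} / alpha_i, and an optimal plan
   pi bounds the negative part through Phi_i^-(x_i) <= c^-(x) + sum_j Phi_j^+(x_j). *)

(* Unlike [change_of_variables] in charge.v, [mu] need not be sigma-finite:
   the density [g] of [nu] is given. *)
Section integral_density.
Local Open Scope ereal_scope.
Context d (T : measurableType d) (R : realType).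
Variables (mu nu : {measure set T -> \bar R}) (g : T -> \bar R).
Hypotheses (g_ge0 : forall x, 0 <= g x) (g_fin : forall x, g x \is a fin_num)
  (mg : measurable_fun setT g)
  (nu_density : forall A, measurable A -> nu A = \int[mu]_(x in A) g x).
Import HBNNSimple.

Lemma integral_density_nnsfun (h : {nnsfun T >-> R}) E : measurable E ->
  \int[mu]_(x in E) ((h x)%:E * g x) = \int[nu]_(x in E) (h x)%:E.
Proof.
move=> mE.
have h_ge0 r x : 0 <= (r * \1_(h @^-1` [set r]) x)%:E.
  exact: nnfun_muleindic_ge0.
under [RHS]eq_integral => x _ do rewrite fimfunE -fsumEFin//.
under eq_integral => x _.
  rewrite fimfunE -fsumEFin// ge0_mule_fsuml; last by move=> r; exact: h_ge0.
  over.
have mind r : measurable_fun E (fun x => (r * \1_(h @^-1` [set r]) x)%:E).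
  by apply: (measurable_comp measurableT) => //; exact: measurable_funM.
rewrite !ge0_integral_fsum//; last 2 first.
- by move=> r; apply: emeasurable_funM; [exact: mind|exact: measurable_funTS].
- by move=> r x _; rewrite mule_ge0.
apply: eq_fsbigr => r /[!inE] -[t _ <-].
under [RHS]eq_integral do rewrite EFinM.
rewrite integralZl_indic_nnsfun//.
under eq_integral do rewrite EFinM -muleA.
rewrite ge0_integralZl//; last 3 first.
- by apply: emeasurable_funM; [exact/measurable_EFinP|exact/measurable_funTS].
- by move=> x _; rewrite mule_ge0.
- by rewrite lee_fin.
under eq_integral do rewrite muleC.
rewrite (eq_integral (g \_ (h @^-1` [set h t]))); last first.
  by move=> x _; rewrite epatch_indic.
by rewrite -integral_mkcondr -nu_density// integral_indic// setIC.
Qed.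

Lemma integral_density f E : (forall x, 0 <= f x) ->
    measurable E -> measurable_fun E f ->
  \int[mu]_(x in E) (f x * g x) = \int[nu]_(x in E) f x.
Proof.
move=> f_ge0 mE mf; pose h := nnsfun_approx mE mf.
have h_cvg x : E x -> (EFin \o h k) x @[k --> \oo] --> f x.
  by move=> Ex; exact: cvg_nnsfun_approx.
have mh k : measurable_fun E (EFin \o h k).
  exact/measurable_EFinP/measurable_funTS.
have h_nd x : E x -> {homo (fun k => (EFin \o h k) x) : a b / (a <= b)%N >-> a <= b}.
  by move=> _ a b ab; rewrite lee_fin; exact/lefP/nd_nnsfun_approx.
have -> : \int[nu]_(x in E) f x =
    lim (\int[nu]_(x in E) (EFin \o h k) x @[k --> \oo]).
  rewrite -monotone_convergence//; last by move=> k x _; rewrite lee_fin.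
  by apply: eq_integral => x /[!inE] Ex; apply/esym/cvg_lim => //; exact: h_cvg.
have -> : \int[mu]_(x in E) (f x * g x) =
    lim (\int[mu]_(x in E) ((EFin \o h k) x * g x) @[k --> \oo]).
  rewrite -monotone_convergence//; first last.
  - by move=> x Ex a b ab; rewrite lee_wpmul2r ?h_nd.
  - by move=> k x _; rewrite mule_ge0 ?lee_fin.
  - by move=> k; apply: emeasurable_funM => //; exact: measurable_funTS.
  apply: eq_integral => x /[!inE] Ex; apply/esym/cvg_lim => //.
  by apply: cvgeZr => //; exact: h_cvg.
by under eq_fun do rewrite integral_density_nnsfun//.
Qed.

End integral_density.

Lemma measurable_expeR (R : realType) : measurable_fun [set: \bar R] expeR.
Proof.
rewrite (_ : expeR = fun x => if x \is a fin_num then (expR (fine x))%:E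
   else if x == +oo then +oo else 0)%E; last by apply: funext => -[].
apply: measurable_fun_ifT.
- apply: (measurable_fun_bool true); rewrite setTI.
  by have := emeasurable_fin_num measurableT (@measurable_id _ (\bar R) setT);
    rewrite setTI.
- apply/measurable_EFinP; apply: measurableT_comp; first exact: measurable_expR.
  exact: fine_measurable.
- apply: measurable_fun_ifT => //.
  apply: (measurable_fun_bool true); rewrite setTI.
  rewrite (_ : _ @^-1` _ = [set +oo%E]); first exact: emeasurable_set1.
  by apply/seteqP; split => x /=; [move/eqP|move=> ->].
Qed.

Section ereal_inequalities.
Local Open Scope ereal_scope.
Context (R : realType).

Lemma lee_prod (I : Type) (s : seq I) (P : pred I) (f g : I -> \bar R) :
  (forall i, P i -> 0 <= f i <= g i) ->
  \prod_(i <- s | P i) f i <= \prod_(i <- s | P i) g i.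
Proof.
move=> fg.
suff /andP[] : 0 <= \prod_(i <- s | P i) f i <= \prod_(i <- s | P i) g i by [].
apply: (big_ind2 (fun x y => 0 <= x <= y)) => //.
- by rewrite lexx andbT.
- by move=> x1 x2 y1 y2 /andP[x10 x12] /andP[y10 y12]; rewrite mule_ge0//= lee_pmul.
Qed.

Lemma expeR_tangent (s : R) (t : \bar R) :
  (expR s)%:E * (1 + (t - s%:E)) <= expeR t.
Proof.
rewrite -[in leRHS](@subeK _ t s%:E)// addeC expeRD.
by rewrite lee_wpmul2l ?lee_fin ?expR_ge0// expeR_ge1Dx.
Qed.

Lemma maxe0_le_expeR (a : R) (p q : \bar R) : (0 < a)%R -> p != -oo -> q != -oo ->
  maxe p 0 <= maxe q 0 + (a^-1)%:E * expeR (a%:E * p - a%:E * q).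
Proof.
move=> a0; have ia0 : (0 < a^-1)%R by rewrite invr_gt0.
case: p => [r| |] // _; case: q => [s| |] // _.
- rewrite -!EFinM -!EFin_max -EFinD lee_fin.
  have : (a^-1 + r - s <= a^-1 * expR (a * r - a * s))%R.
    have -> : (a^-1 + r - s = a^-1 * (1 + (a * r - a * s)))%R.
      by rewrite mulrDr mulr1 mulrBr !mulrA mulVf ?gt_eqF// !mul1r addrA.
    by rewrite ler_wpM2l ?expR_ge1Dx// ltW.
  have : (0 <= a^-1 * expR (a * r - a * s))%R by rewrite mulr_ge0 ?expR_ge0 ?ltW.
  have : (s <= Num.max s 0)%R by rewrite le_max lexx.
  have : (0 <= Num.max s 0)%R by rewrite le_max lexx orbT.
  rewrite ge_max; lra.
- by rewrite maxye addye ?leey// gt_eqF// (lt_le_trans ltNy0)//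
    mule_ge0 ?expeR_ge0// lee_fin ltW.
- by rewrite maxye gt0_muley ?lte_fin// -EFinM /= gt0_muley ?lte_fin//
    addey ?leey// -EFin_max.
- by rewrite maxye addye ?leey// gt_eqF// (lt_le_trans ltNy0)//
    mule_ge0 ?expeR_ge0// lee_fin ltW.
Qed.

Lemma maxeN0_leD (p t c : \bar R) : p != -oo -> 0 <= t -> c <= p + t ->
  maxe (- p) 0 <= maxe (- c) 0 + t.
Proof.
move=> pNy t0 cpt; have [p0|p0] := leP 0 p.
  rewrite (_ : maxe (- p) 0 = 0) ?adde_ge0 ?le_max ?lexx ?orbT//.
  by apply/max_idPr; rewrite leeNl oppe0.
case: t t0 cpt => [t| |] // t0 cpt; last first.
  by rewrite addey ?leey// gt_eqF// (lt_le_trans ltNy0)// le_max lexx orbT.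
case: p pNy p0 cpt => [r| |] // _ r0 cpt.
case: c cpt => [u| |] cpt //=; last by rewrite maxye addye ?leey.
rewrite -EFinD lee_fin in cpt; rewrite lte_fin in r0.
rewrite -!EFin_max -EFinD lee_fin.
have : (- u <= Num.max (- u) 0)%R by rewrite le_max lexx.
have -> : (Num.max (- r) 0 = - r)%R by apply/max_idPl; lra.
lra.
Qed.

Lemma sume_le_addD_maxe0 (N : nat) (f : 'I_N -> \bar R) i :
  \sum_(j < N) f j <= f i + \sum_(j < N) maxe (f j) 0.
Proof.
rewrite (bigD1 i)//= [X in _ <= _ + X](bigD1 i)//=.
apply: leeD2l; apply: (le_trans _ (leeDr _ _)); last by rewrite le_max lexx orbT.
by apply: lee_sum => j _; rewrite le_max lexx.
Qed.

End ereal_inequalities.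

Section integration.
Local Open Scope ereal_scope.
Context {d} {T : measurableType d} {R : realType}.

Lemma integrable_funepos_funeneg {mu : {measure set T -> \bar R}} {f : T -> \bar R} :
  measurable_fun setT f ->
  \int[mu]_x f^\+ x < +oo -> \int[mu]_x f^\- x < +oo ->
  mu.-integrable setT f.
Proof.
move=> mf fp fn; apply/integrableP; split => //.
have -> : (fun x => `|f x|) = f^\+ \+ f^\- by exact: fune_abse.
rewrite ge0_integralD; [exact: lte_add_pinfty|by []|by []| |by []|].
- exact: measurable_funepos.
- exact: measurable_funeneg.
Qed.

Lemma expR_integral_le_integral_expeR (P : probability T R) (h : T -> \bar R) :
  P.-integrable setT h ->
  (expR (fine (\int[P]_x h x)))%:E <= \int[P]_x expeR (h x).
Proof.
move=> ih; set s := fine _.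
have hE : \int[P]_x h x = s%:E by rewrite fineK// integrable_fin_num.
pose J x := (expR s)%:E * (1 + (h x - s%:E)).
have i1 : P.-integrable setT (cst (1 : \bar R)) by exact: finite_measure_integrable_cst.
have i_s : P.-integrable setT (cst s%:E) by exact: finite_measure_integrable_cst.
have iJ : P.-integrable setT J by apply/integrableZl/integrableD/integrableB.
have -> : (expR s)%:E = \int[P]_x J x.
  rewrite integralZl//; last exact/integrableD/integrableB.
  rewrite integralD//; last exact: integrableB.
  rewrite integralB// hE (integral_cst _ _ 1)// (integral_cst _ _ s%:E)//.
  have P1 : P [set: T] = 1 by exact: probability_setT.
  by rewrite [X in 1 * X]P1 [X in s%:E * X]P1 mul1e mule1 subee// adde0 mule1.
rewrite integralE leeBlDr; last exact: integrable_neg_fin_num.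
apply: le_trans (leeDl _ (integral_ge0 _ _)); last by move=> x _; exact: funeneg_ge0.
apply: ge0_le_integral => //.
- by apply: measurable_funepos; exact: measurable_int iJ.
- by apply: measurableT_comp; [exact: measurable_expeR|exact: measurable_int ih].
- by move=> x _; rewrite funeposE ge_max expeR_tangent expeR_ge0.
Qed.

End integration.

Section marginal.
Local Open Scope ereal_scope.

Lemma integral_marginal {R : realType} {n N : nat}
    {P : probability (N.-tuple (n.-tuple R)) R}
    {mu : 'I_N -> probability (n.-tuple R) R} :
  has_marginals P mu ->
  forall i (F : n.-tuple R -> \bar R), (forall x, 0 <= F x) ->
  measurable_fun setT F ->
  \int[mu i]_x F x = \int[P]_x F (tnth x i).
Proof.
move=> Pmu i F F0 mF.
have mt : measurable_fun setT (fun x : N.-tuple (n.-tuple R) => tnth x i).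
  exact: measurable_tnth.
rewrite (eq_measure_integral (pushforward P (fun x : N.-tuple _ => tnth x i))).
  by rewrite ge0_integral_pushforward.
by move=> A mA _; rewrite /pushforward; exact/esym/Pmu.
Qed.

End marginal.

Section Gibbs_maximizer.
Local Open Scope ereal_scope.
Context {R : realType} {n N : nat} {c : N.-tuple (n.-tuple R) -> \bar R}
  {alpha : 'I_N -> R} {m : 'I_N -> {measure set (n.-tuple R) -> \bar R}}
  {Phi : 'I_N -> n.-tuple R -> \bar R}
  {mu : 'I_N -> probability (n.-tuple R) R}.
Hypotheses (alpha_gt0 : forall i, (0 < alpha i)%R)
  (mPhi : forall i, measurable_fun setT (Phi i))
  (Phi_neqNy : forall i x, Phi i x != -oo)
  (Zint_Phi : forall i, 0 < Zint alpha m Phi i < +oo)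
  (mu_Gibbs : forall (i : 'I_N) (A : set (n.-tuple R)), measurable A ->
      mu i A = (\int[m i]_(x in A) expeR (- ((alpha i)%:E * Phi i x)))
                * ((fine (Zint alpha m Phi i))^-1)%:E).

Let z i := fine (Zint alpha m Phi i).
Let gibbs i x := expeR (- ((alpha i)%:E * Phi i x)).

Let ZintE i : Zint alpha m Phi i = (z i)%:E.
Proof. by have /andP[? ?] := Zint_Phi i; rewrite /z fineK// ge0_fin_numE// ltW. Qed.

Let z_gt0 i : (0 < z i)%R.
Proof. by have /andP[? _] := Zint_Phi i; rewrite -lte_fin -ZintE. Qed.

Let measurable_gibbs i : measurable_fun setT (gibbs i).
Proof.
apply: measurableT_comp; first exact: measurable_expeR.
by apply: measurableT_comp; [exact: oppe_measurable|exact: measurable_funeM].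
Qed.

Lemma integral_Gibbs i F : (forall x, 0 <= F x) -> measurable_fun setT F ->
  \int[mu i]_x F x = \int[m i]_x (F x * gibbs i x) * ((z i)^-1)%:E.
Proof.
move=> F0 mF; have zV0 : 0 <= ((z i)^-1)%:E by rewrite lee_fin invr_ge0 ltW.
have mdens : measurable_fun setT (fun x => gibbs i x * ((z i)^-1)%:E).
  exact: emeasurable_funM.
rewrite -ge0_integralZr//; last by move=> x _; rewrite mule_ge0 ?expeR_ge0.
under [RHS]eq_integral do rewrite -muleA.
apply/esym/(@integral_density _ _ _ (m i) (mu i)) => //.
- by move=> x; rewrite mule_ge0 ?expeR_ge0.
- move=> x; rewrite fin_numM// /gibbs; have := Phi_neqNy i x.
  by case: (Phi i x) => [r| |] //= _; rewrite gt0_muley ?lte_fin.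
- move=> A mA; apply: (@eq_trans _ _ (mu i A)) => //.
  rewrite mu_Gibbs// ge0_integralZr//.
  - exact: measurable_funTS.
  - by move=> x _; exact: expeR_ge0.
- exact: emeasurable_funM.
Qed.

Definition exp_gap i (V : n.-tuple R -> \bar R) x :=
  expeR ((alpha i)%:E * Phi i x - (alpha i)%:E * V x).

Lemma measurable_exp_gap i (V : n.-tuple R -> \bar R) : measurable_fun setT V ->
  measurable_fun setT (exp_gap i V).
Proof.
move=> mV; apply: measurableT_comp; first exact: measurable_expeR.
by apply: emeasurable_funB; exact: measurable_funeM.
Qed.

Lemma Zint_ge_integral_exp_gap i (V : 'I_N -> n.-tuple R -> \bar R) :
  measurable_fun setT (V i) ->
  (z i)%:E * \int[mu i]_x exp_gap i (V i) x <= Zint alpha m V i.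
Proof.
move=> mV; rewrite integral_Gibbs//; last 2 first.
- by move=> x; exact: expeR_ge0.
- exact: measurable_exp_gap.
rewrite muleCA -EFinM mulfV ?gt_eqF// mule1.
apply: ge0_le_integral => //.
- by move=> x _; apply: mule_ge0 => //; exact: expeR_ge0.
- by apply: emeasurable_funM; [exact: measurable_exp_gap|exact: measurable_gibbs].
- apply: measurableT_comp; first exact: measurable_expeR.
  by apply: measurableT_comp; [exact: oppe_measurable|exact: measurable_funeM].
move=> x _; rewrite /exp_gap /gibbs; have := Phi_neqNy i x.
case: (Phi i x) => [r| |] // _; first by rewrite -EFinM -expeRD addeAC subee// add0e.
by rewrite gt0_muley ?lte_fin//= mule0 expeR_ge0.
Qed.

Lemma integral_exp_gap_gt0 i V : (mu i).-integrable setT V ->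
  0 < \int[mu i]_x exp_gap i V x.
Proof.
move=> iV; have mV := measurable_int _ iV.
rewrite lt0e integral_ge0 ?andbT; last by move=> x _; exact: expeR_ge0.
apply/negP => /eqP int0.
have exp_gap0 : ae_eq (mu i) setT (exp_gap i V) (cst 0).
  apply/ae_eq_integral_abs => //; first exact: measurable_exp_gap.
  by under eq_integral do rewrite gee0_abs ?expeR_ge0//.
have : \forall x \ae mu i, False.
  apply: filterS2 exp_gap0 (integrable_ae measurableT iV) => x /(_ I) + /(_ I).
  rewrite /exp_gap /= => /eqP; rewrite expeR_eq0; have := Phi_neqNy i x.
  case: (Phi i x) => [r| |] // _ /eqP + /fineK Vx; rewrite -{}Vx.
    by rewrite -!EFinM -EFinB.
  by rewrite gt0_muley ?lte_fin// -EFinM.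
have PF := @ae_properfilter_algebraOfSetsType _ _ _ (mu i).
apply: (@filter_not_empty _ _ (PF _)).
by apply: (lt_le_trans lte01); rewrite -(probability_setT (mu i)).
Qed.

Lemma Zint_gt0 (V : 'I_N -> n.-tuple R -> \bar R) i :
  (mu i).-integrable setT (V i) -> 0 < Zint alpha m V i.
Proof.
move=> iV; apply: (lt_le_trans _ (Zint_ge_integral_exp_gap i V (measurable_int _ iV))).
by rewrite mule_gt0 ?lte_fin// integral_exp_gap_gt0.
Qed.

Let BS_PhiE : BS alpha m Phi = (\prod_i z i `^ (alpha i)^-1)%:E.
Proof.
by rewrite /BS -prodEFin; apply: eq_bigr => i _; rewrite ZintE poweR_EFin.
Qed.

Lemma Zint_lt_pinfty (V : 'I_N -> n.-tuple R -> \bar R) :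
  (forall j, 0 < Zint alpha m V j) -> BS alpha m V <= BS alpha m Phi ->
  forall i, Zint alpha m V i < +oo.
Proof.
move=> Vpos BS_le i; rewrite ltNge leye_eq; apply/negP => /eqP ZVi.
move: BS_le; rewrite BS_PhiE /BS (bigD1 i)//= ZVi poweRyr ?invr_neq0 ?gt_eqF//.
rewrite gt0_mulye ?leye_eq//.
by apply: (big_ind (fun x => 0 < x)) => // [x y|j _]; [exact: mule_gt0|exact: poweR_gt0].
Qed.

Lemma integral_Phi_funepos_lt_pinfty (f : 'I_N -> n.-tuple R -> \bar R) i :
  (forall j, (mu j).-integrable setT (f j)) -> (forall j x, f j x != -oo) ->
  BS alpha m f <= BS alpha m Phi ->
  \int[mu i]_x (Phi i)^\+ x < +oo.
Proof.
move=> intf fNy BS_le; have mf := measurable_int _ (intf i).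
have aV0 : 0 <= ((alpha i)^-1)%:E by rewrite lee_fin invr_ge0 ltW.
have exp_gap_lt : \int[mu i]_x exp_gap i (f i) x < +oo.
  have Zf := Zint_lt_pinfty f (fun j => Zint_gt0 f j (intf j)) BS_le i.
  rewrite ltNge leye_eq; apply/negP => /eqP exp_gapy.
  have := Zint_ge_integral_exp_gap i f (measurable_int _ (intf i)).
  by rewrite exp_gapy gt0_muley ?lte_fin// leye_eq => /eqP Zfy; rewrite Zfy in Zf.
have mexp_gap := measurable_exp_gap i (f i) (measurable_int _ (intf i)).
apply: (@le_lt_trans _ _
    (\int[mu i]_x ((f i)^\+ x + ((alpha i)^-1)%:E * exp_gap i (f i) x))).
  apply: ge0_le_integral => //.
  - exact: measurable_funepos.
  - by apply: emeasurable_funD; [exact: measurable_funepos|exact: measurable_funeM].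
  - by move=> x _; rewrite !funeposE maxe0_le_expeR.
rewrite ge0_integralD; last 5 first.
- by [].
- by move=> x _; exact: funepos_ge0.
- exact: measurable_funepos.
- by move=> x _; apply: mule_ge0 => //; exact: expeR_ge0.
- exact: measurable_funeM.
rewrite ge0_integralZl//; last by move=> x _; exact: expeR_ge0.
apply: lte_add_pinfty; first exact: integral_funepos_lt_pinfty (intf i).
exact: lte_mul_pinfty.
Qed.

Lemma integral_Phi_funeneg_lt_pinfty (pi : probability (N.-tuple (n.-tuple R)) R) i :
  measurable_fun setT c -> (forall x, c x <= \sum_(j < N) Phi j (tnth x j)) ->
  has_marginals pi mu ->
  \int[pi]_x c x \is a fin_num ->
  (forall j, \int[mu j]_x (Phi j)^\+ x < +oo) ->
  \int[mu i]_x (Phi i)^\- x < +oo.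
Proof.
move=> mc Phi_adm pimu cfin Phi_pos.
have mPhi_pos j : measurable_fun setT (fun x : N.-tuple _ => (Phi j)^\+ (tnth x j)).
  by apply: measurableT_comp; [exact: measurable_funepos|exact: measurable_tnth].
have sum_ge0 x : 0 <= \sum_(j < N) (Phi j)^\+ (tnth x j).
  by apply: sume_ge0 => j _; exact: funepos_ge0.
rewrite (integral_marginal pimu); last 2 first.
- by move=> x; exact: funeneg_ge0.
- exact: measurable_funeneg.
apply: (@le_lt_trans _ _
    (\int[pi]_x (c^\- x + \sum_(j < N) (Phi j)^\+ (tnth x j)))).
  apply: ge0_le_integral => //.
  - by apply: measurableT_comp; [exact: measurable_funeneg|exact: measurable_tnth].
  - by apply: emeasurable_funD; [exact: measurable_funeneg|exact: emeasurable_sum].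
  move=> x _; rewrite !funenegE; apply: maxeN0_leD => //.
  apply: le_trans (Phi_adm x) _.
  by under [X in _ + X]eq_bigr => j _ do rewrite funeposE; exact: sume_le_addD_maxe0.
rewrite ge0_integralD; last 5 first.
- by [].
- by move=> x _; exact: funeneg_ge0.
- exact: measurable_funeneg.
- by move=> x _; exact: sum_ge0.
- exact: emeasurable_sum.
rewrite ge0_integral_sum; [|by []|by []|by move=> j x _; exact: funepos_ge0].
apply: lte_add_pinfty.
  move: cfin; rewrite [X in X \is a fin_num]integralE fin_numB => /andP[_].
  by rewrite ge0_fin_numE// integral_ge0// => x _; exact: funeneg_ge0.
apply: lte_sum_pinfty => j _.
by rewrite -(integral_marginal pimu)//; exact: measurable_funepos.
Qed.

Lemma Zint_ge_expR i (V : 'I_N -> n.-tuple R -> \bar R) :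
  (mu i).-integrable setT (Phi i) -> (mu i).-integrable setT (V i) ->
  (z i * expR (alpha i * (fine (\int[mu i]_x Phi i x) - fine (\int[mu i]_x V i x))))%:E
    <= Zint alpha m V i.
Proof.
move=> iPhi iV; apply: le_trans (Zint_ge_integral_exp_gap i V (measurable_int _ iV)).
rewrite EFinM; apply: lee_wpmul2l; first by rewrite lee_fin ltW.
have ih : (mu i).-integrable setT (fun x => (alpha i)%:E * Phi i x - (alpha i)%:E * V i x).
  by apply: integrableB => //; exact: integrableZl.
rewrite [X in expR X](_ : _ = fine (\int[mu i]_x ((alpha i)%:E * Phi i x
    - (alpha i)%:E * V i x))); first exact: expR_integral_le_integral_expeR.
rewrite integralB//; try exact: integrableZl.
rewrite !integralZl// -(fineK (integrable_fin_num _ iPhi))//.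
by rewrite -(fineK (integrable_fin_num _ iV))// -!EFinM -EFinB /= mulrBr.
Qed.

Lemma dual_value_le (g : 'I_N -> n.-tuple R -> \bar R) :
  (forall V : 'I_N -> n.-tuple R -> \bar R,
      (forall i, measurable_fun setT (V i)) -> admissible c V ->
      BS alpha m V <= BS alpha m Phi) ->
  (forall i, (mu i).-integrable setT (Phi i)) -> dual_feasible c mu g ->
  dual_value mu Phi <= dual_value mu g.
Proof.
move=> BS_max iPhi [gadm ig].
pose gap i := (fine (\int[mu i]_x Phi i x) - fine (\int[mu i]_x g i x))%R.
have BS_g : (\prod_i (z i `^ (alpha i)^-1 * expR (gap i)))%:E <= BS alpha m g.
  rewrite -prodEFin; apply: lee_prod => i _.
  rewrite lee_fin mulr_ge0 ?powR_ge0 ?expR_ge0//=.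
  have -> : expR (gap i) = (expR (alpha i * gap i) `^ (alpha i)^-1)%R.
    by rewrite -expRM mulrC mulrA mulVf ?gt_eqF// mul1r.
  rewrite -powRM ?expR_ge0 ?(ltW (z_gt0 i))// -poweR_EFin.
  have Zg := Zint_ge_expR i g (iPhi i) (ig i).
  apply: gt0_ler_poweR => //.
  - by rewrite invr_ge0 ltW.
  - by rewrite in_itv/= leey lee_fin mulr_ge0 ?expR_ge0 ?ltW.
  - by rewrite in_itv/= leey andbT (le_trans _ Zg)// lee_fin mulr_ge0 ?expR_ge0 ?ltW.
have := le_trans BS_g (BS_max g (fun i => measurable_int _ (ig i)) gadm).
rewrite BS_PhiE lee_fin big_split /= -expR_sum.
rewrite ger_pMr; last by apply: prodr_gt0 => i _; rewrite powR_gt0.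
rewrite expR_le1 /dual_value => gap_le0.
rewrite (eq_bigr _ (fun i _ => esym (fineK (integrable_fin_num measurableT (iPhi i))))).
rewrite (eq_bigr _ (fun i _ => esym (fineK (integrable_fin_num measurableT (ig i))))).
by rewrite !sumEFin lee_fin -subr_le0 -sumrB.
Qed.

End Gibbs_maximizer.

Theorem corollary2p2 (R : realType) (n N : nat)
  (c : N.-tuple (n.-tuple R) -> \bar R)
  (alpha : 'I_N -> R)
  (m : 'I_N -> {measure set (n.-tuple R) -> \bar R})
  (Phi : 'I_N -> n.-tuple R -> \bar R)
  (mu : 'I_N -> probability (n.-tuple R) R) :
  measurable_fun setT c ->
  (forall i, 0 < alpha i) ->
  (forall i, measurable_fun setT (Phi i)) ->
  admissible c Phi ->
  (forall V : 'I_N -> n.-tuple R -> \bar R,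
      (forall i, measurable_fun setT (V i)) -> admissible c V ->
      (BS alpha m V <= BS alpha m Phi)%E) ->
  (forall i, (0 < Zint alpha m Phi i < +oo)%E) ->
  (forall (i : 'I_N) (A : set (n.-tuple R)), measurable A ->
      mu i A = ((\int[m i]_(x in A) expeR (- ((alpha i)%:E * Phi i x)))
                * ((fine (Zint alpha m Phi i))^-1)%:E)%E) ->
  kantorovich_duality c mu ->
  dual_minimizer c mu Phi.
Proof.
move=> mc alpha_gt0 mPhi Phi_adm BS_max Zint_Phi mu_Gibbs.
move=> [pi [f [[pimu _] [[f_adm intf] _] _ cfin]]].
have BS_f := BS_max f (fun i => measurable_int _ (intf i)) f_adm.
have Phi_pos i : (\int[mu i]_x (Phi i)^\+ x < +oo)%E.
  exact: (integral_Phi_funepos_lt_pinfty alpha_gt0 mPhi Phi_adm.1 Zint_Phi mu_Gibbs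
    f i intf f_adm.1 BS_f).
have Phi_neg i : (\int[mu i]_x (Phi i)^\- x < +oo)%E.
  exact: (integral_Phi_funeneg_lt_pinfty mPhi Phi_adm.1 pi i mc Phi_adm.2 pimu cfin
    Phi_pos).
have iPhi i := integrable_funepos_funeneg (mPhi i) (Phi_pos i) (Phi_neg i).
split=> [//|g].
exact: (dual_value_le alpha_gt0 mPhi Phi_adm.1 Zint_Phi mu_Gibbs g BS_max iPhi).
Qed.
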